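(* Let $\Phi$ be a nonempty finite set of Boolean formulas built from variables and the constants $\mathrm{True},\mathrm{False}$ using $\wedge$, $\vee$, $\neg$, and let $X$ be the set of variables occurring in $\Phi$. Assume $\Phi$ is overall read-once, i.e., every variable of $X$ occurs exactly once in total across all the formulas of $\Phi$, and that every $\phi\in\Phi$ is non-simplifiable, i.e., $\phi$ is either one of the constants $\mathrm{True}$ or $\mathrm{False}$, or contains no occurrence of a constant. Then $\Phi$ is evasive (with respect to $X$), i.e., every BDD for $\Phi$ has depth $|X|$. *)

From mathcomp Require Import all_boot.

Set Implicit Arguments.
Unset Strict Implicit.
Unset Printing Implicit Defensive.

Inductive form : Type :=
| FVar of nat
| FTrue
| FFalse
| FAnd of form & form
| FOr of form & form
| FNot of form.

Fixpoint eval (a : nat -> bool) (f : form) : bool :=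
  match f with
  | FVar v => a v
  | FTrue => true
  | FFalse => false
  | FAnd f g => eval a f && eval a g
  | FOr f g => eval a f || eval a g
  | FNot f => ~~ eval a f
  end.

Fixpoint occ (f : form) : seq nat :=
  match f with
  | FVar v => [:: v]
  | FTrue | FFalse => [::]
  | FAnd f g | FOr f g => occ f ++ occ g
  | FNot f => occ f
  end.

Fixpoint has_const (f : form) : bool :=
  match f with
  | FVar _ => false
  | FTrue | FFalse => true
  | FAnd f g | FOr f g => has_const f || has_const g
  | FNot f => has_const f
  end.

Definition non_simplifiable (f : form) : Prop :=
  f = FTrue \/ f = FFalse \/ has_const f = false.

Definition all_occ (Phi : seq form) : seq nat := flatten (map occ Phi).

Definition vars (Phi : seq form) : seq nat := undup (all_occ Phi).

Definition overall_read_once (Phi : seq form) : Prop := uniq (all_occ Phi).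

(* A BDD for a family of formulas, represented by its (unfolded) decision tree:
   internal nodes test a variable, leaves carry the tuple of output values
   (one Boolean per formula of Phi, in the order of the list Phi).
   Unfolding a BDD (DAG) into a tree preserves its semantics and its depth
   (length of a longest root-to-leaf path). *)
Inductive bdd : Type :=
| Leaf of seq bool
| Node of nat & bdd & bdd.

Fixpoint run (a : nat -> bool) (t : bdd) : seq bool :=
  match t with
  | Leaf o => o
  | Node x t0 t1 => if a x then run a t1 else run a t0
  end.

Fixpoint depth (t : bdd) : nat :=
  match t with
  | Leaf _ => 0
  | Node _ t0 t1 => (maxn (depth t0) (depth t1)).+1
  end.

Fixpoint wf_bdd (X : seq nat) (tested : seq nat) (t : bdd) : bool :=
  match t with
  | Leaf _ => true
  | Node x t0 t1 =>
      [&& x \in X, x \notin tested,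
          wf_bdd X (x :: tested) t0 & wf_bdd X (x :: tested) t1]
  end.

Definition is_bdd_for (Phi : seq form) (t : bdd) : Prop :=
  wf_bdd (vars Phi) [::] t /\
  forall a : nat -> bool, run a t = map (eval a) Phi.

Definition evasive (Phi : seq form) : Prop :=
  forall t : bdd, is_bdd_for Phi t -> depth t = size (vars Phi).

(* A well-formed BDD tests each variable at most once on a path, so its depth
   is at most |X|.  Conversely, play adversary against the tree: when it tests a
   variable x, which occurs in exactly one formula phi, fix x to the value that
   makes the literal of phi containing x equal to the unit of the connective
   above it, so that this literal disappears (if phi is that literal, it becomes
   a constant).  The result is again read-once and non-simplifiable, on the
   remaining variables, and the tree restricted to that value of x computes it.
   So every test removes at most one variable, and a leaf can only compute a
   family without variables, because a constant-free read-once formula takes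
   both truth values. *)

From mathcomp Require Import all_boot.
From Stdlib Require List.

Set Implicit Arguments.
Unset Strict Implicit.
Unset Printing Implicit Defensive.

Lemma eq_eval_occ a a' f : {in occ f, a =1 a'} -> eval a f = eval a' f.
Proof.
elim: f => [v|||f IHf g IHg|f IHf g IHg|f IHf] //= eq_aa'.
- by rewrite eq_aa' ?mem_head.
- by rewrite IHf ?IHg // => v vf; rewrite eq_aa' // mem_cat vf ?orbT.
- by rewrite IHf ?IHg // => v vf; rewrite eq_aa' // mem_cat vf ?orbT.
- by rewrite IHf.
Qed.

Lemma eval_upd_notin a x b f :
  x \notin occ f -> eval [eta a with x |-> b] f = eval a f.
Proof.
move=> xf; apply: eq_eval_occ => v vf /=.
by case: eqP => // vx; rewrite -vx vf in xf.
Qed.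

Lemma eval_upd_single a a0 x f :
  occ f = [:: x] -> eval [eta a with x |-> a0 x] f = eval a0 f.
Proof.
by move=> fx; apply: eq_eval_occ => v; rewrite fx inE => /eqP -> /=; rewrite eqxx.
Qed.

Definition glue (s : seq nat) (a1 a2 : nat -> bool) v := if v \in s then a1 v else a2 v.

Lemma eval_glue_l a1 a2 f : eval (glue (occ f) a1 a2) f = eval a1 f.
Proof. by apply: eq_eval_occ => v vf; rewrite /glue vf. Qed.

Lemma eval_glue_r s a1 a2 f :
  ~~ has (mem s) (occ f) -> eval (glue s a1 a2) f = eval a2 f.
Proof.
move=> /hasPn sf; apply: eq_eval_occ => v /sf.
by rewrite /glue; case: ifP => // vs /negP[].
Qed.

Lemma const_free_eval_surj f :
  has_const f = false -> uniq (occ f) -> forall c, exists a, eval a f = c.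
Proof.
elim: f => [v|||f IHf g IHg|f IHf g IHg|f IHf] //= cf U c.
- by exists (fun=> c).
- move: cf U; rewrite cat_uniq => /norP[/negbTE cf /negbTE cg] /and3P[Uf fg Ug].
  have [[a1 <-] [a2 eg]] := (IHf cf Uf c, IHg cg Ug true).
  by exists (glue (occ f) a1 a2); rewrite eval_glue_l eval_glue_r // eg andbT.
- move: cf U; rewrite cat_uniq => /norP[/negbTE cf /negbTE cg] /and3P[Uf fg Ug].
  have [[a1 <-] [a2 eg]] := (IHf cf Uf c, IHg cg Ug false).
  by exists (glue (occ f) a1 a2); rewrite eval_glue_l eval_glue_r // eg orbF.
- by have [a ea] := IHf cf U (~~ c); exists a; rewrite ea negbK.
Qed.

Definition eliminable x f := exists b f',
  [/\ has_const f' = false, perm_eq (x :: occ f') (occ f)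
    & forall a, eval [eta a with x |-> b] f = eval a f'].

Section BinaryConnective.

Variables (C : form -> form -> form) (op : bool -> bool -> bool) (e : bool).
Hypothesis eval_C : forall a f g, eval a (C f g) = op (eval a f) (eval a g).
Hypothesis occ_C : forall f g, occ (C f g) = occ f ++ occ g.
Hypothesis has_const_C : forall f g, has_const (C f g) = has_const f || has_const g.
Hypothesis opC : commutative op.
Hypothesis op_unit : left_id e op.

Lemma eliminable_C f g x :
  has_const f = false -> has_const g = false -> uniq (occ f ++ occ g) ->
  x \in occ f ++ occ g ->
  (x \in occ f -> occ f != [:: x] -> eliminable x f) ->
  (x \in occ g -> occ g != [:: x] -> eliminable x g) ->
  eliminable x (C f g).
Proof.
wlog xf : f g / x \in occ f => [wlog cf cg U|cf cg U _ IHf _].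
  rewrite mem_cat => /orP[xf|xg] IHf IHg.
    by apply: wlog => //; rewrite mem_cat xf.
  have [b [f' [cf' p' e']]] : eliminable x (C g f).
    by apply: wlog => //; [rewrite uniq_catC | rewrite mem_cat xg].
  exists b, f'; split=> // [|a].
    by apply: perm_trans p' _; rewrite !occ_C perm_catC.
  by rewrite eval_C opC -eval_C.
move: (U); rewrite cat_uniq has_sym => /and3P[Uf /hasPn/(_ x xf) xg _].
have [fx|fx] := eqVneq (occ f) [:: x].
  (* [f] is a literal in [x]: fix [x] so that [f] becomes the unit [e]. *)
  have [a0 ea0] := const_free_eval_surj cf Uf e.
  exists (a0 x), g; split=> // [|a]; first by rewrite occ_C fx.
  by rewrite eval_C eval_upd_single // ea0 op_unit eval_upd_notin.
have [b [f' [cf' p' e']]] := IHf xf fx.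
exists b, (C f' g); split=> [||a]; first by rewrite has_const_C cf' cg.
  by rewrite !occ_C -cat_cons perm_cat2r.
by rewrite !eval_C e' eval_upd_notin.
Qed.

End BinaryConnective.

Lemma eliminable_const_free f x :
  has_const f = false -> uniq (occ f) -> x \in occ f -> occ f != [:: x] ->
  eliminable x f.
Proof.
elim: f => [v|||f IHf g IHg|f IHf g IHg|f IHf] //= cfg U.
- by rewrite inE => /eqP->; rewrite eqxx.
- move: cfg (U); rewrite cat_uniq => /norP[/negbTE cf /negbTE cg] /and3P[Uf _ Ug].
  move=> xfg _; apply: (eliminable_C (C := FAnd) _ _ _ andbC andTb) => //.
  - by move=> xf /(IHf cf Uf xf).
  - by move=> xg /(IHg cg Ug xg).
- move: cfg (U); rewrite cat_uniq => /norP[/negbTE cf /negbTE cg] /and3P[Uf _ Ug].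
  move=> xfg _; apply: (eliminable_C (C := FOr) _ _ _ orbC orFb) => //.
  - by move=> xf /(IHf cf Uf xf).
  - by move=> xg /(IHg cg Ug xg).
- move=> xf /(IHf cfg U xf)[b [f' [cf' p' e']]].
  by exists b, (FNot f'); split=> // a /=; rewrite e'.
Qed.

Lemma eliminable_non_simplifiable f x :
  non_simplifiable f -> uniq (occ f) -> x \in occ f ->
  exists b f', [/\ non_simplifiable f', perm_eq (x :: occ f') (occ f)
    & forall a, eval [eta a with x |-> b] f = eval a f'].
Proof.
case=> [->|[->|cf]] // U xf.
have [fx|fx] := eqVneq (occ f) [:: x].
  have [a0 ea0] := const_free_eval_surj cf U true.
  exists (a0 x), FTrue; split=> [||a]; [by left | by rewrite fx |].
  by rewrite eval_upd_single.
have [b [f' [cf' p' e']]] := eliminable_const_free cf U xf fx.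
by exists b, f'; split=> //; right; right.
Qed.

Lemma constant_occ_nil f :
  non_simplifiable f -> uniq (occ f) -> (forall a a', eval a f = eval a' f) ->
  occ f = [::].
Proof.
case=> [->|[->|cf]] // U const_f.
have [a1 e1] := const_free_eval_surj cf U true.
have [a0 e0] := const_free_eval_surj cf U false.
by have := const_f a1 a0; rewrite e1 e0.
Qed.

Lemma all_occ_cons phi Phi : all_occ (phi :: Phi) = occ phi ++ all_occ Phi.
Proof. by []. Qed.

Lemma map_eval_upd_notin Phi a x b :
  x \notin all_occ Phi -> map (eval [eta a with x |-> b]) Phi = map (eval a) Phi.
Proof.
elim: Phi => //= phi Phi IH; rewrite all_occ_cons mem_cat => /norP[xphi xPhi].
by rewrite eval_upd_notin // IH.
Qed.

Lemma eliminable_family Phi x :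
  uniq (all_occ Phi) -> List.Forall non_simplifiable Phi -> x \in all_occ Phi ->
  exists b Phi', [/\ List.Forall non_simplifiable Phi',
    perm_eq (x :: all_occ Phi') (all_occ Phi)
    & forall a, map (eval [eta a with x |-> b]) Phi = map (eval a) Phi'].
Proof.
elim: Phi => //= phi Phi IH; rewrite all_occ_cons cat_uniq mem_cat.
move=> /and3P[Uphi dis UPhi] /List.Forall_cons_iff[NSphi NSPhi].
have [xphi _|xphi /= xPhi] := boolP (x \in occ phi).
  have [b [phi' [NSphi' p' e']]] := eliminable_non_simplifiable NSphi Uphi xphi.
  exists b, (phi' :: Phi); split; first by constructor.
    by rewrite !all_occ_cons -cat_cons perm_cat2r.
  move=> a /=; rewrite e' map_eval_upd_notin //.
  by apply: contra dis => xPhi; apply/hasP; exists x.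
have [b [Phi' [NSPhi' p' e']]] := IH UPhi NSPhi xPhi.
exists b, (phi :: Phi'); split; [by constructor | |].
  by rewrite all_occ_cons -cat1s perm_catCA perm_cat2l cat1s.
by move=> a /=; rewrite eval_upd_notin // (e' a).
Qed.

Lemma constant_all_occ_nil Phi :
  uniq (all_occ Phi) -> List.Forall non_simplifiable Phi ->
  (forall a a', map (eval a) Phi = map (eval a') Phi) -> all_occ Phi = [::].
Proof.
elim: Phi => //= phi Phi IH; rewrite all_occ_cons cat_uniq.
move=> /and3P[Uphi _ UPhi] /List.Forall_cons_iff[NSphi NSPhi] const_Phi.
have const_phi a a' : eval a phi = eval a' phi by case: (const_Phi a a').
have const_Phi' a a' : map (eval a) Phi = map (eval a') Phi by case: (const_Phi a a').
by rewrite (constant_occ_nil NSphi Uphi const_phi) IH.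
Qed.

Fixpoint restrict x b t :=
  match t with
  | Leaf o => Leaf o
  | Node y t0 t1 =>
      if y == x then restrict x b (if b then t1 else t0)
      else Node y (restrict x b t0) (restrict x b t1)
  end.

Lemma run_restrict a x b t : run a (restrict x b t) = run [eta a with x |-> b] t.
Proof.
elim: t => //= y t0 IH0 t1 IH1.
by case: eqP => _ /=; rewrite -IH0 -IH1 //; case: b {IH0 IH1}.
Qed.

Lemma depth_restrict x b t : depth (restrict x b t) <= depth t.
Proof.
elim: t => //= y t0 IH0 t1 IH1; case: eqP => _ /=.
  apply: leqW; case: b IH0 IH1 => IH0 IH1.
    exact: leq_trans IH1 (leq_maxr _ _).
  exact: leq_trans IH0 (leq_maxl _ _).
by rewrite ltnS geq_max !leq_max IH0 IH1 orbT.
Qed.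

Lemma depth_restrict_root x b t0 t1 :
  depth (restrict x b (Node x t0 t1)) < depth (Node x t0 t1).
Proof.
rewrite /= eqxx ltnS; apply: leq_trans (depth_restrict _ _ _) _.
by case: b; rewrite ?leq_maxl ?leq_maxr.
Qed.

Lemma wf_bdd_depth X tested t :
  uniq tested -> {subset tested <= X} -> wf_bdd X tested t ->
  depth t + size tested <= size X.
Proof.
elim: t tested => [o|x t0 IH0 t1 IH1] tested U sub /=.
  by move=> _; apply: uniq_leq_size.
case/and4P=> xX xt wf0 wf1.
have U' : uniq (x :: tested) by rewrite /= xt.
have sub' : {subset x :: tested <= X} by move=> v /predU1P[->|/sub].
rewrite addSnnS addn_maxl geq_max.
by rewrite (IH0 _ U' sub' wf0) (IH1 _ U' sub' wf1).
Qed.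

Lemma size_all_occ_le_depth t Phi :
  uniq (all_occ Phi) -> List.Forall non_simplifiable Phi ->
  (forall a, run a t = map (eval a) Phi) -> size (all_occ Phi) <= depth t.
Proof.
have [n] := ubnP (depth t); elim: n t Phi => // n IH [o|y t0 t1] Phi lt_t U NS t_Phi.
  by rewrite (constant_all_occ_nil U NS) // => a a'; rewrite -!t_Phi.
have [b [Phi' [U' NS' size_Phi run_Phi']]] : exists b Phi',
    [/\ uniq (all_occ Phi'), List.Forall non_simplifiable Phi',
        size (all_occ Phi) <= (size (all_occ Phi')).+1
      & forall a, run [eta a with y |-> b] (Node y t0 t1) = map (eval a) Phi'].
  have [yPhi|yPhi] := boolP (y \in all_occ Phi).
    have [b [Phi' [NS' p' e']]] := eliminable_family U NS yPhi.
    exists b, Phi'; split=> // [||a]; last by rewrite t_Phi e'.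
      by have := perm_uniq p'; rewrite U => /andP[].
    by rewrite -(perm_size p').
  by exists false, Phi; split=> // a; rewrite t_Phi map_eval_upd_notin.
have lt_t' := depth_restrict_root y b t0 t1.
apply: leq_trans size_Phi (leq_trans _ lt_t').
apply: IH U' NS' _ => [|a]; first exact: leq_trans lt_t' lt_t.
by rewrite run_restrict; apply: run_Phi'.
Qed.

Theorem proposition2 (Phi : seq form) :
  Phi <> [::] ->
  overall_read_once Phi ->
  (forall phi, List.In phi Phi -> non_simplifiable phi) ->
  evasive Phi.
Proof.
move=> _ RO NS t [wf t_Phi]; apply/eqP; rewrite eqn_leq.
have -> /= : depth t <= size (vars Phi).
  by rewrite -[depth t]addn0; apply: wf_bdd_depth wf.
rewrite /vars undup_id //; apply: size_all_occ_le_depth t_Phi => //.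
exact/List.Forall_forall.
Qed.
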